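(* Let $n,m\in\mathbb{N}$, $f,g\in C[0,1]$, and $I_{n,m}(f)=\int_0^1\overline{B}_{n,m}(f;x)\,dx$. Then $$ \left|I_{n,m}(fg)-I_{n,m}(f)I_{n,m}(g)\right|\le\frac14\,\widetilde{\omega}\left(f;2\sqrt{\frac1{12}+\frac1{6m^2n}}\right)\widetilde{\omega}\left(g;2\sqrt{\frac1{12}+\frac1{6m^2n}}\right). $$
   Context: $\overline{B}_{n,m}(f;x)=B_n^{[\frac{k-1}{m},\frac km]}(f;x)$ for $x\in\left[\frac{k-1}{m},\frac km\right]$, $1\le k\le m$, where $B_n^{[a,b]}(f;x)=\frac{1}{(b-a)^n}\sum_{i=0}^n\binom ni(x-a)^i(b-x)^{n-i}f(a+i\frac{b-a}{n})$; equivalently $I_{n,m}(f)=\frac{1}{m(n+1)}\sum_{k=1}^m\sum_{i=0}^nf\left(\frac{kn-n+i}{mn}\right)$. For $f\in C[0,1]$, $\omega(f;t)=\sup\{|f(x)-f(y)|:x,y\in[0,1],|x-y|\le t\}$, and $\widetilde{\omega}(f;t)=\sup_{0\le x\le t\le y\le1,\,x\ne y}\frac{(t-x)\omega(f,y)+(y-t)\omega(f,x)}{y-x}$ for $0\le t\le1$, $\widetilde{\omega}(f;t)=\omega(f,1)$ for $t>1$ (the least concave majorant of $\omega(f;\cdot)$). *)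

From HB Require Import structures.
From mathcomp Require Import all_boot all_order all_algebra.
From mathcomp Require Import all_classical all_reals all_analysis.
Set Implicit Arguments. Unset Strict Implicit. Unset Printing Implicit Defensive.
Import Order.TTheory GRing.Theory Num.Theory.
Import numFieldNormedType.Exports.
Local Open Scope classical_set_scope.
Local Open Scope ring_scope.

Section Defs.
Variable R : realType.

Definition bernstein_ab (n : nat) (a b : R) (f : R -> R) (x : R) : R :=
  ((b - a) ^+ n)^-1 *
  \sum_(i < n.+1) ('C(n, i))%:R * (x - a) ^+ i * (b - x) ^+ (n - i)
                   * f (a + i%:R * (b - a) / n%:R).

(* index k-1 in {0,..,m-1} of the interval [(k-1)/m, k/m] containing x in [0,1]
   (at interior breakpoints both adjacent Bernstein pieces take the same value
   f(k/m), so the choice there is immaterial) *)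
Definition piece_index (m : nat) (x : R) : nat :=
  minn (Num.truncn (m%:R * x)) m.-1.

Definition Bbar (n m : nat) (f : R -> R) (x : R) : R :=
  let k := piece_index m x in
  bernstein_ab n (k%:R / m%:R) (k.+1%:R / m%:R) f x.

Definition Inm (n m : nat) (f : R -> R) : R :=
  Rintegral lebesgue_measure `[0, 1] (Bbar n m f).

Definition omega (f : R -> R) (t : R) : R :=
  sup [set r : R | exists x y : R, [/\ x \in `[0, 1], y \in `[0, 1],
                       `|x - y| <= t & r = `|f x - f y| ] ].

(* least concave majorant of omega f *)
Definition omega_tilde (f : R -> R) (t : R) : R :=
  if t <= 1 then
    sup [set r : R | exists x y : R, [/\ (0 <= x) && (x <= t), (t <= y) && (y <= 1), x != y
           & r = ((t - x) * omega f y + (y - t) * omega f x) / (y - x)] ]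
  else omega f 1.

End Defs.

From HB Require Import structures.
From mathcomp Require Import all_boot all_order all_algebra.
From mathcomp Require Import all_classical all_reals all_analysis.
From mathcomp Require Import ring lra.
Set Implicit Arguments. Unset Strict Implicit. Unset Printing Implicit Defensive.
Import Order.TTheory GRing.Theory Num.Theory.
Import numFieldNormedType.Exports.
Local Open Scope classical_set_scope.
Local Open Scope ring_scope.

(* The integral of B_n^{[a,b]}(F) over [a,b] is (b-a)/(n+1) times the sum of F over
   the n+1 Bernstein nodes (Beta integrals), so I_{n,m}(F) is the
   mean of F(X) for X uniform on the m(n+1) nodes k/m + i/(mn).  Hence
   I(fg) - I(f)I(g) = Cov(f(X), g(X)), and Var X = 1/12 + 1/(6m^2n) because k and i
   are independent uniform indices.  By Cauchy-Schwarz it suffices to bound the standard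
   deviation of f(X) by w/2, w = omega_tilde(f; 2 sigma), sigma the standard deviation of X.
   A supporting line of the concave majorant at 2 sigma yields
   |f(X_s) - f(X_t)| <= 2a + l |X_s - X_t| with a + l sigma = w/2; then f(X) lies within
   a of an l-Lipschitz function of X, so its standard deviation is at most a + l sigma. *)

Lemma quadratic_ge0_discr (R : realFieldType) (A B C : R) : 0 <= C ->
  (forall s, 0 <= A + 2 * s * B + s ^+ 2 * C) -> B ^+ 2 <= A * C.
Proof.
move=> C0 Hq; have [C_eq0|C_neq0] := eqVneq C 0.
  rewrite C_eq0 in Hq *; have [->|B_neq0] := eqVneq B 0; first by rewrite expr0n mulr0.
  have := Hq (- (A + 1) / (2 * B)).
  have -> : A + 2 * (- (A + 1) / (2 * B)) * B + (- (A + 1) / (2 * B)) ^+ 2 * 0 = -1.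
    by field; rewrite B_neq0.
  by rewrite ler0N1.
have C_gt0 : 0 < C by rewrite lt_def C_neq0 C0.
have := Hq (- B / C).
have -> : A + 2 * (- B / C) * B + (- B / C) ^+ 2 * C = (A * C - B ^+ 2) / C by field.
by rewrite pmulr_lge0 ?invr_gt0 // subr_ge0.
Qed.

Lemma norm_le_sqr (R : realDomainType) (c r : R) : 0 <= r -> c ^+ 2 <= r ^+ 2 -> `|c| <= r.
Proof.
move=> r0 cr; rewrite -(ger0_norm r0) -ler_sqr ?nnegrE ?normr_ge0 //.
by rewrite !real_normK ?num_real.
Qed.

Section FiniteMean.
Variables (R : rcfType) (T : finType).
Hypothesis T_neq0 : (0 < #|T|)%N.

Definition mean (F : T -> R) : R := (\sum_t F t) / #|T|%:R.
Definition cov (F G : T -> R) : R := mean (F \* G) - mean F * mean G.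
Definition var (F : T -> R) : R := cov F F.

Let card_neq0 : (#|T|%:R : R) != 0. Proof. by rewrite pnatr_eq0 -lt0n. Qed.

Lemma mean_lin a b F G : mean (fun t => a * F t + b * G t) = a * mean F + b * mean G.
Proof. by rewrite /mean big_split /= -!mulr_sumr; field. Qed.

Lemma mean_cst c : mean (fun=> c) = c.
Proof. by rewrite /mean sumr_const -mulr_natr; field. Qed.

Lemma eq_mean F G : F =1 G -> mean F = mean G.
Proof. by move=> FG; rewrite /mean; under eq_bigr do rewrite FG. Qed.

Lemma ler_mean F G : (forall t, F t <= G t) -> mean F <= mean G.
Proof. by move=> FG; rewrite /mean ler_pM2r ?invr_gt0 ?ltr0n //; exact: ler_sum. Qed.

Lemma cov_pairwise F G :
  cov F G = (\sum_s \sum_t (F s - F t) * (G s - G t)) / (2 * #|T|%:R ^+ 2).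
Proof.
pose SF := \sum_t F t; pose SG := \sum_t G t; pose SFG := \sum_t F t * G t.
have inner s : \sum_t (F s - F t) * (G s - G t) =
    #|T|%:R * (F s * G s) - F s * SG - G s * SF + SFG.
  rewrite (eq_bigr (fun t => F s * G s + ((- F s) * G t + ((- G s) * F t + F t * G t))));
    last by move=> t _; ring.
  by rewrite !big_split /= sumr_const -!big_distrr /= -mulr_natl /SF /SG /SFG; ring.
rewrite (eq_bigr (fun s => #|T|%:R * (F s * G s) + ((- SG) * F s + ((- SF) * G s + SFG))));
  last by move=> s _; rewrite inner; ring.
by rewrite !big_split /= sumr_const -!big_distrr /= -mulr_natl /cov /mean /SF /SG /SFG; field.
Qed.

Lemma var_ge0 F : 0 <= var F.
Proof.
rewrite /var cov_pairwise divr_ge0 ?mulr_ge0 ?exprn_ge0 //.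
by apply: sumr_ge0 => s _; apply: sumr_ge0 => t _; rewrite -expr2 sqr_ge0.
Qed.

Lemma var_lin a b F G : var (fun t => a * F t + b * G t) =
  a ^+ 2 * var F + 2 * a * b * cov F G + b ^+ 2 * var G.
Proof.
rewrite /var /cov mean_lin.
rewrite (@eq_mean _ (fun t => a ^+ 2 * (F \* F) t + 1 * (2 * a * b * (F \* G) t
                                      + b ^+ 2 * (G \* G) t))) => [|t /=]; last by ring.
by rewrite !mean_lin; ring.
Qed.

Lemma cov_CauchySchwarz F G : cov F G ^+ 2 <= var F * var G.
Proof.
apply: quadratic_ge0_discr (var_ge0 _) _ => s.
by have := var_ge0 (fun t => 1 * F t + s * G t); rewrite var_lin expr1n !mul1r mulr1.
Qed.

Lemma norm_cov_le F G a b : 0 <= a -> 0 <= b -> var F <= a ^+ 2 -> var G <= b ^+ 2 ->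
  `|cov F G| <= a * b.
Proof.
move=> a0 b0 Fa Gb; apply: norm_le_sqr; first exact: mulr_ge0.
by apply: le_trans (cov_CauchySchwarz F G) _; rewrite exprMn ler_pM ?var_ge0.
Qed.

Lemma var_add_le F G a b : 0 <= a -> 0 <= b -> var F <= a ^+ 2 -> var G <= b ^+ 2 ->
  var (F \+ G) <= (a + b) ^+ 2.
Proof.
move=> a0 b0 Fa Gb; have := norm_cov_le a0 b0 Fa Gb; rewrite ler_norml => /andP[_ FG].
have -> : var (F \+ G) = var (fun t => 1 * F t + 1 * G t).
  by congr var; apply/funext => t /=; rewrite !mul1r.
rewrite var_lin !expr1n !mul1r mulr1 sqrrD; lra.
Qed.

Lemma var_le_mean_sqr F : var F <= mean (F \* F).
Proof. by rewrite /var /cov lerBlDr lerDl -expr2 sqr_ge0. Qed.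

Lemma var_lipschitz (h x : T -> R) l : 0 <= l ->
  (forall s t, `|h s - h t| <= l * `|x s - x t|) -> var h <= l ^+ 2 * var x.
Proof.
move=> l0 hl; rewrite /var !cov_pairwise; set Y := 2 * _ ^+ 2.
rewrite mulrA ler_pM2r ?invr_gt0 ?mulr_gt0 ?exprn_gt0 ?ltr0n //.
rewrite big_distrr /=; apply: ler_sum => s _; rewrite big_distrr /=.
apply: ler_sum => t _; rewrite -!expr2 -exprMn -[X in X <= _]real_normK ?num_real //.
rewrite -[X in _ <= X]real_normK ?num_real // ler_sqr ?nnegrE ?normr_ge0 //.
by rewrite normrM (ger0_norm l0).
Qed.

Lemma near_lipschitz_approx (x F : T -> R) a l : 0 <= l ->
    (forall s t, `|F s - F t| <= 2 * a + l * `|x s - x t|) ->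
  exists h : T -> R, (forall t, `|F t - h t| <= a) /\
                     (forall s t, `|h s - h t| <= l * `|x s - x t|).
Proof.
move=> l0 HF; have [t0 _] := card_gt0P T_neq0.
(* McShane's lower envelope: [a + env] is [l]-Lipschitz in [x] and within [a] of [F]. *)
pose env t := \big[Order.min/F t0 + l * `|x t - x t0|]_s (F s + l * `|x t - x s|).
have env_le t : env t <= F t.
  by apply: le_trans (bigmin_le _ t _) _; rewrite subrr normr0 mulr0 addr0.
have env_ge t : F t - 2 * a <= env t.
  have Ft w : F t - 2 * a <= F w + l * `|x t - x w|.
    by have := HF t w; rewrite ler_norml => /andP[_]; lra.
  by apply: le_bigmin => [|w _]; apply: Ft.
have env_lip u v : env u - l * `|x u - x v| <= env v.
  have Fu w : env u - l * `|x u - x v| <= F w + l * `|x v - x w|.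
    have tri : `|x u - x w| <= `|x u - x v| + `|x v - x w|.
      by rewrite (le_trans _ (ler_normD _ _)) // addrA subrK.
    have := bigmin_le (F t0 + l * `|x u - x t0|) w (fun w => F w + l * `|x u - x w|).
    have := ler_wpM2l l0 tri; rewrite -/(env u); lra.
  by apply: le_bigmin => [|w _]; apply: Fu.
exists (fun t => a + env t); split=> [t|s t].
  by have := env_le t; have := env_ge t; rewrite ler_norml; lra.
have := env_lip s t; have := env_lip t s; rewrite distrC ler_norml; lra.
Qed.

Lemma var_le_near_lipschitz (x F : T -> R) a l : 0 <= a -> 0 <= l ->
    (forall s t, `|F s - F t| <= 2 * a + l * `|x s - x t|) ->
  var F <= (a + l * Num.sqrt (var x)) ^+ 2.
Proof.
move=> a0 l0 HF; have [h [Fh h_lip]] := near_lipschitz_approx l0 HF.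
have -> : F = (F \- h) \+ h by apply/funext => t /=; rewrite subrK.
apply: var_add_le => //; first by rewrite mulr_ge0 ?sqrtr_ge0.
  apply: le_trans (var_le_mean_sqr _) _; rewrite -[a ^+ 2]mean_cst; apply: ler_mean => t /=.
  by rewrite -expr2 -real_normK ?num_real // ler_sqr ?nnegrE ?normr_ge0.
by apply: le_trans (var_lipschitz l0 h_lip) _; rewrite exprMn sqr_sqrtr ?var_ge0.
Qed.

Lemma norm_cov_near_lipschitz (x F G : T -> R) a l b u :
    0 <= a -> 0 <= l -> 0 <= b -> 0 <= u ->
    (forall s t, `|F s - F t| <= 2 * a + l * `|x s - x t|) ->
    (forall s t, `|G s - G t| <= 2 * b + u * `|x s - x t|) ->
  `|cov F G| <= (a + l * Num.sqrt (var x)) * (b + u * Num.sqrt (var x)).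
Proof.
move=> a0 l0 b0 u0 HF HG.
by apply: norm_cov_le; rewrite ?addr_ge0 ?mulr_ge0 ?sqrtr_ge0 ?var_le_near_lipschitz.
Qed.

End FiniteMean.

Section ProductMean.
Variables (R : rcfType) (A B : finType).
Hypotheses (A_neq0 : (0 < #|A|)%N) (B_neq0 : (0 < #|B|)%N).

Lemma mean_mul_indep (u : A -> R) (v : B -> R) :
  mean (fun p : A * B => u p.1 * v p.2) = mean u * mean v.
Proof.
rewrite /mean -(pair_bigA _ (fun a b => u a * v b)) /= -big_distrlr /= card_prod natrM invfM; ring.
Qed.

Lemma mean_fst (u : A -> R) : mean (fun p : A * B => u p.1) = mean u.
Proof.
rewrite -[RHS]mulr1 -[X in _ * X](mean_cst B_neq0) -mean_mul_indep.
by apply: eq_mean => p; rewrite mulr1.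
Qed.

Lemma mean_snd (v : B -> R) : mean (fun p : A * B => v p.2) = mean v.
Proof.
rewrite -[RHS]mul1r -[X in X * _](mean_cst A_neq0) -mean_mul_indep.
by apply: eq_mean => p; rewrite mul1r.
Qed.

Lemma var_lin_indep a b (u : A -> R) (v : B -> R) :
  var (fun p : A * B => a * u p.1 + b * v p.2) = a ^+ 2 * var u + b ^+ 2 * var v.
Proof.
have prodA : (0 < #|{: A * B}|)%N by rewrite card_prod muln_gt0 A_neq0.
have cov0 : cov (fun p : A * B => u p.1) (fun p => v p.2) = 0.
  by rewrite /cov mean_mul_indep mean_fst mean_snd subrr.
rewrite var_lin // cov0 mulr0 addr0 /var /cov !mean_fst.
by rewrite (mean_fst (u \* u)) (mean_snd (v \* v)) !mean_snd.
Qed.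

End ProductMean.

Lemma sumr_ord_natr (R : comPzRingType) N :
  2 * \sum_(i < N) (i%:R : R) = N%:R * (N%:R - 1).
Proof.
elim: N => [|N IH]; first by rewrite big_ord0 mulr0 mul0r.
by rewrite big_ord_recr /= mulrDr IH -natr1; ring.
Qed.

Lemma sumr_ord_natr_sqr (R : comPzRingType) N :
  6 * \sum_(i < N) (i%:R ^+ 2 : R) = N%:R * (N%:R - 1) * (2 * N%:R - 1).
Proof.
elim: N => [|N IH]; first by rewrite big_ord0 mulr0 !mul0r.
by rewrite big_ord_recr /= mulrDr IH -natr1; ring.
Qed.

Lemma var_ord (R : rcfType) N : (0 < N)%N ->
  var (fun i : 'I_N => i%:R : R) = (N%:R ^+ 2 - 1) / 12.
Proof.
move=> N0; have N_neq0 : (N%:R : R) != 0 by rewrite pnatr_eq0 -lt0n.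
rewrite /var /cov /mean card_ord.
rewrite (eq_bigr (fun i : 'I_N => i%:R ^+ 2)) => [|i _]; last by rewrite expr2.
have e1 := sumr_ord_natr R N; have e2 := sumr_ord_natr_sqr R N.
rewrite (_ : \sum_(i < N) _ = N%:R * (N%:R - 1) * (2 * N%:R - 1) / 6); last by rewrite -e2; field.
rewrite (_ : \sum_(i < N) _ = N%:R * (N%:R - 1) / 2); last by rewrite -e1; field.
by field.
Qed.

(* The [i]-th node [a + i (b - a) / n] of [bernstein_ab] on [[k/m, (k+1)/m]], kept in
   that form so that it matches the Bernstein sum syntactically. *)
Definition bbar_node {R : fieldType} (n m k i : nat) : R :=
  k%:R / m%:R + i%:R * (k.+1%:R / m%:R - k%:R / m%:R) / n%:R.

Lemma bbar_nodeE (R : fieldType) n m k i : (m%:R : R) != 0 ->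
  bbar_node n m k i = m%:R^-1 * k%:R + (m%:R * n%:R)^-1 * i%:R :> R.
Proof.
move=> m_neq0; rewrite /bbar_node invfM.
by rewrite (_ : k.+1%:R / m%:R - k%:R / m%:R = m%:R^-1) -?natr1; [ring | field].
Qed.

Lemma var_bbar_node (R : rcfType) n m : (0 < n)%N -> (0 < m)%N ->
  var (fun p : 'I_m * 'I_n.+1 => bbar_node n m p.1 p.2) =
  12^-1 + (6 * m%:R ^+ 2 * n%:R)^-1 :> R.
Proof.
move=> n0 m0; have m_neq0 : (m%:R : R) != 0 by rewrite pnatr_eq0 -lt0n.
have n_neq0 : (n%:R : R) != 0 by rewrite pnatr_eq0 -lt0n.
under eq_fun do rewrite bbar_nodeE //.
rewrite (@var_lin_indep _ _ _ _ _ _ _ (fun k : 'I_m => k%:R) (fun i : 'I_n.+1 => i%:R))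
  ?card_ord //.
rewrite !var_ord // -natr1.
by field; rewrite n_neq0 m_neq0.
Qed.

Lemma sqrt_var_bbar_node_bounds (R : rcfType) n m : (0 < n)%N -> (0 < m)%N ->
  let sigma := Num.sqrt (var (fun p : 'I_m * 'I_n.+1 => bbar_node n m p.1 p.2) : R) in
  0 < sigma /\ 2 * sigma <= 1.
Proof.
move=> n0 m0 /=; rewrite var_bbar_node //.
have var_gt0 : 0 < 12^-1 + (6 * m%:R ^+ 2 * n%:R)^-1 :> R by rewrite ltr_wpDr ?invr_ge0 ?invr_gt0.
split; first by rewrite sqrtr_gt0.
rewrite -(ler_pM2l (_ : 0 < 2^-1)) ?invr_gt0 // mulKf // mulr1.
rewrite -(ger0_norm (sqrtr_ge0 _)); apply: norm_le_sqr; first by rewrite invr_ge0.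
rewrite sqr_sqrtr ?(ltW var_gt0) // (_ : 2^-1 ^+ 2 = 12^-1 + 6^-1 :> R); last by field.
rewrite lerD2l lef_pV2 ?posrE ?mulr_gt0 ?exprn_gt0 ?ltr0n // -mulrA ler_peMr //.
by rewrite -natrX -natrM ler1n muln_gt0 expn_gt0 m0.
Qed.

Section Modulus.
Variables (R : realType) (f : R -> R) (M : R).
Hypothesis f_bounded : forall x, x \in `[0, 1] -> `|f x| <= M.

Let in01_0 : (0 : R) \in `[0, 1]. Proof. by rewrite in_itv /= lexx ler01. Qed.

Let omega_set_ub u : ubound [set r | exists x y, [/\ x \in `[0, 1], y \in `[0, 1],
                                   `|x - y| <= u & r = `|f x - f y|]] (M + M).
Proof.
move=> r [x [y [x01 y01 _ ->]]].
by apply: le_trans (ler_normB _ _) _; apply: lerD; exact: f_bounded.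
Qed.

Lemma omega_ub x y u : x \in `[0, 1] -> y \in `[0, 1] -> `|x - y| <= u ->
  `|f x - f y| <= omega f u.
Proof. by move=> x01 y01 xyu; apply: ub_le_sup; [exists (M + M) | exists x, y]. Qed.

Lemma omega_ge0 u : 0 <= u -> 0 <= omega f u.
Proof.
move=> u0; apply: le_trans (omega_ub in01_0 in01_0 _); last by rewrite subrr normr0.
by rewrite subrr normr0.
Qed.

Lemma omega_le_bound u : 0 <= u -> omega f u <= M + M.
Proof.
move=> u0; rewrite /omega; apply: ge_sup; last exact: omega_set_ub.
by exists `|f 0 - f 0|, 0, 0; split; rewrite ?subrr ?normr0.
Qed.

Lemma le_omega u v : 0 <= u -> u <= v -> omega f u <= omega f v.
Proof.
move=> u0 uv; apply: ge_sup => [|r [x [y [x01 y01 xyu ->]]]].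
  by exists `|f 0 - f 0|, 0, 0; split; rewrite ?subrr ?normr0.
by apply: omega_ub => //; exact: le_trans uv.
Qed.

Lemma omega_chord_le_tilde t x y : 0 < t -> t <= 1 -> 0 <= x -> x <= t ->
    t <= y -> y <= 1 -> x != y ->
  ((t - x) * omega f y + (y - t) * omega f x) / (y - x) <= omega_tilde f t.
Proof.
move=> t0 t1 x0 xt ty y1 xy; rewrite /omega_tilde t1; apply: ub_le_sup; last first.
  by exists x, y; split => //; apply/andP.
exists (M + M) => r [x' [y' [/andP[x0' xt'] /andP[ty' y1'] xy' ->]]].
have yx : 0 < y' - x' by rewrite subr_gt0 lt_def eq_sym xy' (le_trans xt').
rewrite ler_pdivrMr //.
have := ler_wpM2l (_ : 0 <= t - x') (omega_le_bound (le_trans (ltW t0) ty')).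
have := ler_wpM2l (_ : 0 <= y' - t) (omega_le_bound x0').
rewrite !subr_ge0; move=> /(_ ty') ? /(_ xt') ?; lra.
Qed.

Lemma omega_le_tilde t : 0 < t -> t <= 1 -> omega f t <= omega_tilde f t.
Proof.
move=> t0 t1; have := omega_chord_le_tilde t0 t1 (lexx 0) (ltW t0) (lexx t) t1 (negbT (lt_eqF t0)).
by rewrite subrr mul0r addr0 subr0 mulrC mulKf // gt_eqF.
Qed.

Section SupportLine.
Variable t : R.
Hypotheses (t_gt0 : 0 < t) (t_le1 : t <= 1).
Local Notation W := (omega_tilde f t).

Let omega_le_W u : 0 <= u -> u <= t -> omega f u <= W.
Proof. by move=> u0 ut; apply: le_trans (omega_le_tilde t_gt0 t_le1); exact: le_omega. Qed.

Let slope_le v u : 0 <= v -> v < t -> t < u -> u <= 1 ->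
  (omega f u - W) / (u - t) <= (W - omega f v) / (t - v).
Proof.
move=> v0 vt tu u1; rewrite ler_pdivrMr ?subr_gt0 // mulrAC ler_pdivlMr ?subr_gt0 //.
have := omega_chord_le_tilde t_gt0 t_le1 v0 (ltW vt) (ltW tu) u1 (negbT (lt_eqF (lt_trans vt tu))).
by rewrite ler_pdivrMr ?subr_gt0 ?(lt_trans vt tu) //; lra.
Qed.

Lemma omega_support_line (s : seq R) : (forall u, u \in s -> 0 <= u <= 1) ->
  exists2 l, 0 <= l & forall u, u \in 0 :: s -> omega f u <= W - l * (t - u).
Proof.
(* [l] is the least slope from a point [(v, omega f v)], [v < t], up to [(t, W)];
   by [slope_le] it still dominates every slope from [(t, W)] to a point on the right. *)
move=> s01; pose q v := (W - omega f v) / (t - v).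
pose l := \big[Order.min/q 0]_(v <- 0 :: s | v < t) q v.
have s01' u : u \in 0 :: s -> 0 <= u <= 1.
  by rewrite inE => /predU1P[->|/s01 //]; rewrite lexx ler01.
have q_ge0 v : 0 <= v -> v < t -> 0 <= q v.
  by move=> v0 vt; rewrite divr_ge0 // subr_ge0 ?omega_le_W // ltW.
exists l => [|u us].
  rewrite /l big_seq_cond.
  by apply: le_bigmin => [|v /andP[/s01' /andP[v0 _] vt]]; rewrite q_ge0.
have [u0 u1] := andP (s01' u us).
have [ut|tu] := ltP u t.
  have : l <= q u by apply: ge_bigmin_seq.
  by rewrite ler_pdivlMr ?subr_gt0 //; lra.
have [<-|ut] := eqVneq t u; first by rewrite subrr mulr0 subr0 omega_le_tilde.
have {ut tu} tu : t < u by rewrite lt_def eq_sym ut tu.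
have : (omega f u - W) / (u - t) <= l.
  rewrite /l big_seq_cond.
  apply: le_bigmin => [|v /andP[/s01' /andP[v0 _] vt]]; last exact: slope_le.
  exact: slope_le (lexx 0) t_gt0 tu u1.
by rewrite ler_pdivrMr ?subr_gt0 //; lra.
Qed.

End SupportLine.

Lemma omega_tilde_split (T : finType) (x : T -> R) (sigma : R) :
    (forall t, x t \in `[0, 1]) -> 0 < sigma -> 2 * sigma <= 1 ->
  exists a l, [/\ 0 <= a, 0 <= l,
    forall s t, `|f (x s) - f (x t)| <= 2 * a + l * `|x s - x t|
    & a + l * sigma = omega_tilde f (2 * sigma) / 2].
Proof.
move=> x01 sigma0 sigma1; have t0 : 0 < 2 * sigma by rewrite mulr_gt0.
set W := omega_tilde f (2 * sigma).
pose dist p := `|x p.1 - x p.2|.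
have [|l l0 Hl] := omega_support_line t0 sigma1 (s := [seq dist p | p <- enum {: T * T}]).
  move=> _ /mapP[[s t] _ ->]; rewrite /dist normr_ge0 /=.
  have := x01 s; have := x01 t; rewrite !in_itv /= => /andP[? ?] /andP[? ?].
  by rewrite ler_norml; apply/andP; split; lra.
exists ((W - l * (2 * sigma)) / 2), l; split => //; last by field.
  rewrite divr_ge0 // (le_trans (omega_ge0 (lexx 0))) //.
  by rewrite -[2 * sigma]subr0; apply: Hl; exact: mem_head.
move=> s t; apply: le_trans (omega_ub (x01 s) (x01 t) (lexx _)) _.
have -> : 2 * ((W - l * (2 * sigma)) / 2) + l * dist (s, t) =
          W - l * (2 * sigma - dist (s, t)) by field.
by apply: (Hl (dist (s, t))); rewrite inE (map_f dist) ?orbT ?mem_enum.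
Qed.

End Modulus.

Section BernsteinIntegral.
Variable R : realType.
Local Notation mu := (@lebesgue_measure R).

Lemma integrable_horner (p : {poly R}) (a b : R) :
  mu.-integrable `[a, b] (EFin \o horner p).
Proof.
apply: continuous_compact_integrable; first exact: segment_compact.
by apply: continuous_subspaceT => x; exact: continuous_horner.
Qed.

Lemma integrable_setU (A B : set R) (g : R -> \bar R) : measurable A -> measurable B ->
  [disjoint A & B] -> mu.-integrable A g -> mu.-integrable B g ->
  mu.-integrable (A `|` B) g.
Proof.
move=> mA mB AB iA iB; have mAB : measurable (A `|` B) by exact: measurableU.
rewrite -[A `|` B]setTI; apply/integrable_restrict => //=.
have -> : g \_ (A `|` B) = (g \_ A) \+ (g \_ B).
  apply/funext => x; rewrite /= !patchE.
  have [xA|xA] := boolP (x \in A).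
    have xB : x \notin B.
      apply/negP => /set_mem xB; move/disj_setPS: AB => /(_ x); apply.
      by split => //; exact: set_mem.
    by rewrite (negbTE xB) mem_set ?adde0 //; left; exact: set_mem.
  have [xB|xB] := boolP (x \in B); first by rewrite mem_set ?add0e //; right; exact: set_mem.
  by rewrite adde0; case: ifPn => // /set_mem [] /mem_set; rewrite ?(negbTE xA) ?(negbTE xB).
by apply: integrableD => //; apply/integrable_restrict => //=; rewrite setTI.
Qed.

Lemma Rintegral_sum (D : set R) (N : nat) (h : 'I_N -> R -> R) : measurable D ->
  (forall i, mu.-integrable D (EFin \o h i)) ->
  \int[mu]_(x in D) (\sum_(i < N) h i x) = \sum_(i < N) \int[mu]_(x in D) h i x.
Proof.
move=> mD hi; rewrite /Rintegral; under eq_integral do rewrite -sumEFin.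
rewrite (@integral_sum _ _ _ mu D mD _ (fun i x => (h i x)%:E)) //.
by rewrite -EFin_sum_fine // => i _; apply: integrable_fin_num; [exact: mD | exact: hi].
Qed.

Lemma Rintegral_beta (a b : R) (i k : nat) : a < b ->
  \int[mu]_(x in `[a, b]) ((x - a) ^+ i * (b - x) ^+ k) =
  (b - a) ^+ (i + k).+1 * ((i`! * k`!)%:R / (i + k).+1`!%:R).
Proof.
move=> ab; pose F u := a + (b - a) * u; pose G x := (x - a) ^+ i * (b - x) ^+ k.
have Fp : F = horner (a%:P + (b - a) *: 'X) by apply/funext => u; rewrite !hornerE.
have Gp : G = horner (('X - a%:P) ^+ i * (b%:P - 'X) ^+ k).
  by apply/funext => u; rewrite !hornerE.
have dF : F^`()%classic = cst (b - a).
  rewrite Fp -derivE derivD derivC derivZ derivX add0r.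
  by apply/funext => u; rewrite !hornerE.
have := @integration_by_substitution_increasing R F G 0 1 ler01.
rewrite [F 0]/F [F 1]/F mulr0 addr0 mulr1 addrC subrK dF => subst.
rewrite /Rintegral subst; first last.
- by rewrite Gp; apply: continuous_subspaceT => x; exact: continuous_horner.
- rewrite Fp; split; first by move=> x _; exact: derivable_horner.
    exact/cvg_at_right_filter/continuous_horner.
  exact/cvg_at_left_filter/continuous_horner.
- exact: is_cvg_cst.
- exact: is_cvg_cst.
- by move=> x _; exact: cst_continuous.
- by move=> x y _ _ xy; rewrite /F ltrD2l ltr_pM2l // subr_gt0.
rewrite -/(Rintegral _ _ _).
transitivity (\int[mu]_(u in `[0, 1]) ((b - a) ^+ (i + k).+1 * XMonemX i k u)).
  apply: eq_Rintegral => u _; rewrite /XMonemX /unstable.onem /= /G /F.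
  have -> : a + (b - a) * u - a = (b - a) * u by ring.
  have -> : b - (a + (b - a) * u) = (b - a) * (1 - u) by ring.
  by rewrite !exprMn -addSn exprD exprS; ring.
rewrite RintegralZl //; last exact: integrable_XMonemX.
by congr (_ * _); rewrite Rintegral_mkcond; exact: beta_fun_fact.
Qed.

Lemma bernstein_ab_horner n (a b : R) F : bernstein_ab n a b F =
  horner (((b - a) ^+ n)^-1 *: \sum_(i < n.+1)
    ('C(n, i)%:R * F (a + i%:R * (b - a) / n%:R)) *: (('X - a%:P) ^+ i * (b%:P - 'X) ^+ (n - i))).
Proof.
apply/funext => x; rewrite /bernstein_ab hornerZ horner_sum; congr (_ * _).
apply: eq_bigr => i _; rewrite hornerZ !hornerE -[RHS]/(_ * _ * _); ring.
Qed.

Lemma Rintegral_bernstein_ab n (a b : R) F : a < b ->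
  \int[mu]_(x in `[a, b]) bernstein_ab n a b F x =
  (b - a) / n.+1%:R * \sum_(i < n.+1) F (a + i%:R * (b - a) / n%:R).
Proof.
move=> ab; rewrite /bernstein_ab.
pose c (i : 'I_n.+1) := ((b - a) ^+ n)^-1 * 'C(n, i)%:R * F (a + i%:R * (b - a) / n%:R).
have term_integrable (i : 'I_n.+1) e :
    mu.-integrable `[a, b] (EFin \o (fun x => e * ((x - a) ^+ i * (b - x) ^+ (n - i)))).
  rewrite (_ : (fun x => _) = horner (e%:P * (('X - a%:P) ^+ i * (b%:P - 'X) ^+ (n - i)))).
    exact: integrable_horner.
  by apply/funext => x; rewrite !hornerE.
transitivity (\int[mu]_(x in `[a, b]) \sum_(i < n.+1) c i * ((x - a) ^+ i * (b - x) ^+ (n - i))).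
  by apply: eq_Rintegral => x _; rewrite mulr_sumr; apply: eq_bigr => i _; rewrite /c; ring.
rewrite Rintegral_sum // mulr_sumr; apply: eq_bigr => i _.
rewrite RintegralZl //; last first.
  by apply: eq_integrable (term_integrable i 1) => // x _ /=; rewrite mul1r.
have i_le_n : (i <= n)%N by rewrite -ltnS.
rewrite Rintegral_beta // subnKC // /c factS (natrM _ n.+1) -(bin_fact i_le_n) natrM.
have f_neq0 j : (j`!%:R : R) != 0 by rewrite pnatr_eq0 -lt0n fact_gt0.
have C_neq0 : ('C(n, i)%:R : R) != 0 by rewrite pnatr_eq0 -lt0n bin_gt0.
have n1_neq0 : (n.+1%:R : R) != 0 by rewrite pnatr_eq0.
rewrite exprS; field.
by rewrite addrC natr1 n1_neq0 !f_neq0 C_neq0 expf_neq0 // subr_eq0 gt_eqF.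
Qed.

Lemma bernstein_ab_left n (a b : R) F : a != b -> bernstein_ab n a b F a = F a.
Proof.
move=> ab; rewrite /bernstein_ab big_ord_recl big1 ?addr0 => [|i _]; last first.
  by rewrite subrr expr0n /= mulr0 !mul0r.
rewrite /= bin0 subn0 subrr !expr0 !mul1r !mul0r addr0 mulrA mulVf ?mul1r //.
by rewrite expf_neq0 // subr_eq0 eq_sym.
Qed.

Lemma bernstein_ab_right n (a b : R) F : a != b -> (0 < n)%N ->
  bernstein_ab n a b F b = F b.
Proof.
move=> ab n0; rewrite /bernstein_ab big_ord_recr big1 ?add0r => [|i _]; last first.
  by rewrite subrr expr0n /= subn_eq0 leqNgt ltn_ord !mulr0 mul0r.
rewrite /= binn subnn subrr !expr0 mulr1 mul1r.
rewrite mulrAC divff ?mul1r ?pnatr_eq0 -?lt0n // add0r [a + _]addrC subrK.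
by rewrite mulKf // expf_neq0 // subr_eq0 eq_sym.
Qed.

End BernsteinIntegral.

Section BbarIntegral.
Variables (R : realType) (n m : nat) (F : R -> R).
Hypotheses (n_gt0 : (0 < n)%N) (m_gt0 : (0 < m)%N).
Local Notation mu := (@lebesgue_measure R).
Local Notation knot k := (k%:R / m%:R : R).

Let m_neq0 : (m%:R : R) != 0. Proof. by rewrite pnatr_eq0 -lt0n. Qed.

Let knot_lt k : knot k < knot k.+1.
Proof. by rewrite ltr_pM2r ?invr_gt0 ?ltr0n // ltr_nat. Qed.

Lemma Bbar_on_piece k x : (k < m)%N -> x \in `[knot k, knot k.+1] ->
  Bbar n m F x = bernstein_ab n (knot k) (knot k.+1) F x.
Proof.
move=> km; rewrite in_itv /= => /andP[kx xk].
have m0 : (0 : R) < m%:R by rewrite ltr0n.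
have k_le : (k%:R : R) <= m%:R * x by rewrite -ler_pdivrMl // mulrC.
have le_k1 : m%:R * x <= k.+1%:R by rewrite -ler_pdivlMl // mulrC.
rewrite /Bbar /piece_index.
have [lt_k1|ge_k1] := ltP (m%:R * x) k.+1%:R.
  rewrite (@truncn_def _ _ k); last by rewrite k_le lt_k1.
  by rewrite (minn_idPl _) // -ltnS prednK.
have mx : m%:R * x = k.+1%:R by apply/eqP; rewrite eq_le le_k1 ge_k1.
rewrite mx natrK.
have -> : x = knot k.+1 by rewrite -mx mulrC mulKf.
have [k1m|mk1] := ltnP k.+1 m.
  rewrite (minn_idPl _); last by rewrite -ltnS prednK.
  by rewrite bernstein_ab_left ?bernstein_ab_right ?lt_eqF ?knot_lt.
have -> : m = k.+1 by apply/eqP; rewrite eqn_leq km mk1.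
by rewrite /= minnC (minn_idPl _).
Qed.

Lemma Rintegral_Bbar_piece k : (k < m)%N ->
  mu.-integrable `[knot k, knot k.+1] (EFin \o Bbar n m F) /\
  \int[mu]_(x in `[knot k, knot k.+1]) Bbar n m F x =
  (m%:R * n.+1%:R)^-1 * \sum_(i < n.+1) F (bbar_node n m k i).
Proof.
move=> km; have eqB : {in `[knot k, knot k.+1],
    bernstein_ab n (knot k) (knot k.+1) F =1 Bbar n m F}.
  by move=> x x_in; rewrite (Bbar_on_piece km x_in).
split.
  apply: (@eq_integrable _ _ _ mu _ _ (EFin \o bernstein_ab n (knot k) (knot k.+1) F)) => //.
    by move=> x x_in /=; rewrite eqB //; move: x_in; rewrite inE.
  rewrite bernstein_ab_horner; exact: (integrable_horner _ (knot k) (knot k.+1)).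
rewrite (@eq_Rintegral _ _ _ mu _ (bernstein_ab n (knot k) (knot k.+1) F));
  last by move=> x; rewrite inE => /eqB ->.
rewrite Rintegral_bernstein_ab //; congr (_ * _).
by rewrite -mulrBl -natr1 addrAC subrr add0r mul1r invfM.
Qed.

Lemma Rintegral_Bbar_prefix j : (j < m)%N ->
  mu.-integrable `[0, knot j.+1] (EFin \o Bbar n m F) /\
  \int[mu]_(x in `[0, knot j.+1]) Bbar n m F x =
  \sum_(k < j.+1) (m%:R * n.+1%:R)^-1 * \sum_(i < n.+1) F (bbar_node n m k i).
Proof.
elim: j => [|j IH] jm.
  have knot0 : knot 0 = 0 by rewrite mul0r.
  by rewrite big_ord1; have := Rintegral_Bbar_piece jm; rewrite knot0.
have [int_c Ic] := IH (ltnW jm); have [int_cd Icd] := Rintegral_Bbar_piece jm.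
rewrite big_ord_recr -Ic -Icd /=.
set c := knot j.+1 in int_c Ic int_cd Icd *; set d := knot j.+2 in int_cd Icd *.
have cd : c < d by exact: knot_lt.
have split_cd : `[0, d]%classic = `[0, c]%classic `|` `]c, d]%classic.
  by rewrite (@itv_bndbnd_setU _ _ (BLeft 0) (BRight c) (BRight d)) //
    bnd_simp ?(ltW cd) // divr_ge0.
have disj : [disjoint `[0, c]%classic & `]c, d]%classic].
  apply/disj_setPS => x []; rewrite /= !in_itv /= => /andP[_ xc] /andP[cx _].
  by have := lt_le_trans cx xc; rewrite ltxx.
have int_oc : mu.-integrable `]c, d] (EFin \o Bbar n m F).
  by apply: integrableS int_cd => //; exact: subset_itv_oc_cc.
have int_d : mu.-integrable `[0, d] (EFin \o Bbar n m F).
  by rewrite split_cd; apply: integrable_setU.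
split => //; rewrite split_cd Rintegral_setU -?split_cd //.
by rewrite Rintegral_itv_obnd_cbnd.
Qed.

Lemma Inm_mean :
  Inm n m F = mean (fun p : 'I_m * 'I_n.+1 => F (bbar_node n m p.1 p.2)).
Proof.
have [|_] := Rintegral_Bbar_prefix (_ : m.-1 < m)%N; first by rewrite ltn_predL.
rewrite prednK // divff // => I_eq.
rewrite /Inm I_eq /mean -(pair_bigA _ (fun (k : 'I_m) (i : 'I_n.+1) => F (bbar_node n m k i))) /=.
by rewrite card_prod !card_ord natrM -mulr_sumr [RHS]mulrC.
Qed.

End BbarIntegral.

Lemma continuous_itv_bounded (R : realType) (f : R -> R) (a b : R) : a <= b ->
  {within `[a, b], continuous f} -> exists M, forall x, x \in `[a, b] -> `|f x| <= M.
Proof.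
move=> ab cf; have [c1 _ f_le] := EVT_max ab cf; have [c2 _ f_ge] := EVT_min ab cf.
exists (`|f c1| + `|f c2|) => x x_ab; have := f_le _ x_ab; have := f_ge _ x_ab.
have := ler_norm (f c1); have := ler_norm (- f c2); rewrite normrN.
have := normr_ge0 (f c1); have := normr_ge0 (f c2).
by rewrite ler_norml => *; apply/andP; split; lra.
Qed.

Lemma bbar_node_in01 (R : realFieldType) n m (k : 'I_m) (i : 'I_n.+1) : (0 < n)%N ->
  bbar_node n m k i \in (`[0, 1] : interval R).
Proof.
move=> n0; have m0 : (0 < m)%N by apply: leq_ltn_trans (ltn_ord k).
have m_neq0 : (m%:R : R) != 0 by rewrite pnatr_eq0 -lt0n.
have n_neq0 : (n%:R : R) != 0 by rewrite pnatr_eq0 -lt0n.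
have -> : bbar_node n m k i = (k * n + i)%:R / (m * n)%:R :> R.
  by rewrite bbar_nodeE // natrD !natrM; field; rewrite n_neq0 m_neq0.
rewrite in_itv /= divr_ge0 //= ler_pdivrMr ?ltr0n ?muln_gt0 ?m0 // mul1r ler_nat.
have i_le : (i <= n)%N by rewrite -ltnS.
by rewrite (leq_trans (leq_add (leqnn _) i_le)) // addnC -mulSn leq_mul2r ltn_ord orbT.
Qed.

Theorem mainTheorem7 (R : realType) (n m : nat) (f g : R -> R) :
  (0 < n)%N -> (0 < m)%N ->
  {within `[0, 1], continuous f} -> {within `[0, 1], continuous g} ->
  `|Inm n m (f \* g) - Inm n m f * Inm n m g|
    <= 4^-1 * omega_tilde f (2 * Num.sqrt (12^-1 + (6 * m%:R ^+ 2 * n%:R)^-1))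
            * omega_tilde g (2 * Num.sqrt (12^-1 + (6 * m%:R ^+ 2 * n%:R)^-1)).
Proof.
move=> n0 m0 cf cg.
pose X (p : 'I_m * 'I_n.+1) : R := bbar_node n m p.1 p.2.
have nodes_gt0 : (0 < #|{: 'I_m * 'I_n.+1}|)%N by rewrite card_prod !card_ord muln_gt0 m0.
have X01 p : X p \in `[0, 1] by exact: bbar_node_in01.
rewrite !Inm_mean // -(var_bbar_node R n0 m0) -/X.
have [sigma_gt0 sigma_le] := sqrt_var_bbar_node_bounds R n0 m0.
have [Mf f_bounded] := continuous_itv_bounded ler01 cf.
have [Mg g_bounded] := continuous_itv_bounded ler01 cg.
have [a [l [a0 l0 f_near a_l]]] := omega_tilde_split f_bounded X01 sigma_gt0 sigma_le.
have [b [u [b0 u0 g_near b_u]]] := omega_tilde_split g_bounded X01 sigma_gt0 sigma_le.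
apply: le_trans (norm_cov_near_lipschitz nodes_gt0 a0 l0 b0 u0 f_near g_near) _.
by rewrite a_l b_u mulrACA -invfM -natrM mulrC mulrA.
Qed.
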